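(* Let $p\ge 10$ and let $s$ be an integer with $1\le s<p/3-1$. Suppose Assumption 1 holds and Assumption 2 holds with some $0\le\delta_s<1$. For $k=1,\dots,s$ let $\lambda_k=\lambda_k(\bar D)$. Then there exists a constant $C_L>0$ depending only on $a_u$ and $a_\ell$ such that $$\inf_{\hat f}\ \sup_{f^*\in\mathcal{F}_{T,s,D}}\mathbb{E}\big[\|\hat f-f^*\|_2^2\big]\ \ge\ C_L\max_{1\le k\le s}\left\{\min\left(\frac{k}{p^2\lambda_k^2},\ \frac{k}{(1+\delta_s)T}\log\frac{p-k-1}{k/2}\right)\right\},$$ where the infimum is over all measurable estimators $\hat f$ of $f^*$ based on $y$ (which may depend on $T$, $A$, $D$).
   Context: Setup: $n,p\ge1$ integers, $T>0$. $D\in\mathbb{R}^{p\times p}$ is an orthonormal matrix with columns $d_1,\dots,d_p$, where $d_1=p^{-1/2}(1,\dots,1)^\top$; $\bar D=[d_2,\dots,d_p]\in\mathbb{R}^{p\times(p-1)}$. For an integer $s\ge1$, $\mathcal{F}_{T,s,D}=\{f\in\mathbb{R}^p_{\ge0}:\ \|f\|_1=1,\ \|\bar D^\top f\|_0\le s\}$, where $\|v\|_0$ is the number of nonzero entries. Given a sensing matrix $A\in\mathbb{R}^{n\times p}$ and $f^*\in\mathcal{F}_{T,s,D}$, the observation is $y=(y_1,\dots,y_n)$ with independent $y_i\sim\mathrm{Poisson}(T(Af^* )_i)$; expectation is over $y$. Assumption 1: there are constants $a_\ell<a_u$ and a matrix $\widetilde A\in\mathbb{R}^{n\times p}$ with all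 entries in $[a_\ell/\sqrt n,a_u/\sqrt n]$ such that $A=\big(\widetilde A+\frac{a_u-2a_\ell}{\sqrt n}\mathbb{1}_{n\times p}\big)/\big(2(a_u-a_\ell)\sqrt n\big)$, with $\mathbb{1}_{n\times p}$ the all-ones matrix. Assumption 2: there is $\delta_s\ge0$ such that $\|\widetilde A D u\|_2^2\le(1+\delta_s)\|u\|_2^2$ for all $u\in\mathbb{R}^p$ with $\|u\|_0\le 2s$. $s$-sparse localization: for a matrix $X$ with $m$ columns and $1\le k\le m$, $\lambda_k(X)=\max\{\|Xv\|_\infty:\ v\in\{-1,0,1\}^{m},\ \|v\|_0=k\}$. Here $\log$ is the natural logarithm. *)

From Stdlib Require Import Reals Lra Lia List Arith.
Import ListNotations.
Open Scope R_scope.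

(* Vectors in R^m are functions nat -> R (only indices < m matter);
   matrices are functions nat -> nat -> R (row, column), 0-based. *)

Fixpoint rsum (m : nat) (g : nat -> R) : R :=
  match m with O => 0 | S m' => rsum m' g + g m' end.

Fixpoint rprod (m : nat) (g : nat -> R) : R :=
  match m with O => 1 | S m' => rprod m' g * g m' end.

Definition nnz (m : nat) (v : nat -> R) : nat :=
  length (filter (fun j => if Req_EM_T (v j) 0 then false else true) (seq 0 m)).

Definition sqnorm (m : nat) (v : nat -> R) : R := rsum m (fun j => v j ^ 2).

Definition orthonormal_D (p : nat) (D : nat -> nat -> R) : Prop :=
  (forall i j, (i < p)%nat -> (j < p)%nat ->
     rsum p (fun k => D k i * D k j) = if Nat.eqb i j then 1 else 0) /\
  (forall k, (k < p)%nat -> D k 0%nat = / sqrt (INR p)).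

(* Dbar^T f, coordinate j (j = 0..p-2) : <d_{j+1}, f> *)
Definition DbarT_apply (p : nat) (D : nat -> nat -> R) (f : nat -> R) : nat -> R :=
  fun j => rsum p (fun i => D i (S j) * f i).

Definition in_F (p s : nat) (D : nat -> nat -> R) (f : nat -> R) : Prop :=
  (forall j, (j < p)%nat -> 0 <= f j) /\
  rsum p (fun j => Rabs (f j)) = 1 /\
  (nnz (p - 1) (DbarT_apply p D f) <= s)%nat.

Definition A_of (n : nat) (a_l a_u : R) (At : nat -> nat -> R) : nat -> nat -> R :=
  fun i j => (At i j + (a_u - 2 * a_l) / sqrt (INR n)) / (2 * (a_u - a_l) * sqrt (INR n)).

Definition assumption1 (n p : nat) (a_l a_u : R) (At : nat -> nat -> R) : Prop :=
  forall i j, (i < n)%nat -> (j < p)%nat ->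
    a_l / sqrt (INR n) <= At i j <= a_u / sqrt (INR n).

Definition assumption2 (n p s : nat) (At D : nat -> nat -> R) (delta : R) : Prop :=
  forall u : nat -> R, (nnz p u <= 2 * s)%nat ->
    sqnorm n (fun i => rsum p (fun j => At i j * rsum p (fun l => D j l * u l)))
    <= (1 + delta) * sqnorm p u.

(* s-sparse localization lambda_k(Dbar), Dbar = [d_2..d_p] has p-1 columns *)
Fixpoint ternary_vectors (m : nat) : list (list R) :=
  match m with
  | O => [[]]
  | S m' => flat_map (fun v => [(-1) :: v; 0 :: v; 1 :: v]) (ternary_vectors m')
  end.

Definition nnz_list (v : list R) : nat :=
  length (filter (fun x => if Req_EM_T x 0 then false else true) v).

Definition Dbar_apply_inf_norm (p : nat) (D : nat -> nat -> R) (v : list R) : R :=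
  fold_right Rmax 0
    (map (fun i => Rabs (rsum (p - 1) (fun j => D i (S j) * nth j v 0))) (seq 0 p)).

Definition lambda_loc (p : nat) (D : nat -> nat -> R) (k : nat) : R :=
  fold_right Rmax 0
    (map (Dbar_apply_inf_norm p D)
       (filter (fun v => Nat.eqb (nnz_list v) k) (ternary_vectors (p - 1)))).

Definition poisson_pmf (mu : R) (k : nat) : R := exp (- mu) * mu ^ k / INR (fact k).

(* sum of F y over all y in {0,..,M-1}^n (y i = 0 for i >= n) *)
Fixpoint box_sum (n M : nat) (F : (nat -> nat) -> R) : R :=
  match n with
  | O => F (fun _ => 0%nat)
  | S n' => rsum M (fun k => box_sum n' M (fun y => F (fun i => if Nat.eqb i n' then k else y i)))
  end.

(* Truncation (to y in {0..M-1}^n) of E ||fhat(y) - f||_2^2, where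
   y_i ~ Poisson(T (A f)_i) independently.  The full expectation is the
   (monotone) limit / supremum over M of these partial sums. *)
Definition partial_risk (n p : nat) (T : R) (A : nat -> nat -> R) (f : nat -> R)
    (fhat : (nat -> nat) -> nat -> R) (M : nat) : R :=
  box_sum n M (fun y =>
    rprod n (fun i => poisson_pmf (T * rsum p (fun j => A i j * f j)) (y i))
    * sqnorm p (fun j => fhat y j - f j)).

Definition lb_term (p : nat) (T delta : R) (D : nat -> nat -> R) (k : nat) : R :=
  Rmin (INR k / (INR p ^ 2 * lambda_loc p D k ^ 2))
       (INR k / ((1 + delta) * T) * ln ((INR p - INR k - 1) / (INR k / 2))).

Definition lb_max (p s : nat) (T delta : R) (D : nat -> nat -> R) : R :=
  fold_right Rmax (lb_term p T delta D 1) (map (lb_term p T delta D) (seq 1 s)).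

From Stdlib Require Import Reals List Arith.
From Stdlib Require Import Lra Lia FunctionalExtensionality Classical.
Import ListNotations.
Open Scope R_scope.

(* Fix the sparsity level [k] attaining the maximum and cut [q = (p - 1) / k] coordinates of
   [Dbar^T] into [k] blocks of length [q].  For [v] choosing one position per block, the density
   [f_v = p^{-1} 1 + t Dbar u_v] (with [u_v] the indicator of the chosen positions) lies in
   [F_{T,s,D}] as long as [t lambda_k <= 1/p].  An estimator decodes a block as position [j]
   when it lies within [t / sqrt 2] of [t e_j]; by Bessel's inequality every decoding error costs [t^2 / 2] in squared loss.  Moving
   the chosen position of one block changes [f] by a [2]-sparse vector in the frame [D], so by
   Assumptions 1 and 2 the two Poisson laws have chi-square divergence at most
   [exp (T t^2 (1 + delta) / (a_u - a_l)^2) - 1 <= (q - 1) / 32].  A chi-square change of measure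
   then shows that the [q - 1] alternatives of a block are misdecoded with probability at least
   [1/4] on average, and averaging over all [v] gives some [f_v] with risk at least [k t^2 / 8].
   Expectations are truncated to a box of counts carrying Poisson mass at least [63/64]. *)

(** * Finite sums and products *)

Lemma rsum_ext m f g :
  (forall i, (i < m)%nat -> f i = g i) -> rsum m f = rsum m g.
Proof.
  revert f g; induction m as [|m IH]; intros f g H; simpl; [reflexivity|].
  rewrite (IH f g) by (intros; apply H; lia).
  rewrite H by lia; reflexivity.
Qed.

Lemma rsum_le m f g :
  (forall i, (i < m)%nat -> f i <= g i) -> rsum m f <= rsum m g.
Proof.
  revert f g; induction m as [|m IH]; intros f g H; simpl; [lra|].
  assert (rsum m f <= rsum m g) by (apply IH; intros; apply H; lia).
  assert (f m <= g m) by (apply H; lia).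
  lra.
Qed.

Lemma rsum_const m c : rsum m (fun _ => c) = INR m * c.
Proof.
  induction m as [|m IH]; simpl rsum; [simpl; lra|].
  rewrite IH, S_INR; lra.
Qed.

Lemma rsum_nonneg m f : (forall i, (i < m)%nat -> 0 <= f i) -> 0 <= rsum m f.
Proof.
  intros H; apply Rle_trans with (rsum m (fun _ => 0)).
  - rewrite rsum_const; lra.
  - now apply rsum_le.
Qed.

Lemma rsum_plus m f g : rsum m (fun i => f i + g i) = rsum m f + rsum m g.
Proof. induction m as [|m IH]; simpl; [lra|rewrite IH; lra]. Qed.

Lemma rsum_minus m f g : rsum m (fun i => f i - g i) = rsum m f - rsum m g.
Proof. induction m as [|m IH]; simpl; [lra|rewrite IH; lra]. Qed.

Lemma rsum_scal m c f : rsum m (fun i => c * f i) = c * rsum m f.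
Proof. induction m as [|m IH]; simpl; [lra|rewrite IH; lra]. Qed.

Lemma rsum_exchange a b (f : nat -> nat -> R) :
  rsum a (fun i => rsum b (fun j => f i j)) = rsum b (fun j => rsum a (fun i => f i j)).
Proof.
  revert f; induction a as [|a IH]; intros f; simpl.
  - rewrite rsum_const; lra.
  - rewrite IH, <- rsum_plus; reflexivity.
Qed.

Lemma rsum_indicator m c g : (c < m)%nat ->
  rsum m (fun i => if Nat.eqb i c then g i else 0) = g c.
Proof.
  revert c; induction m as [|m IH]; intros c Hc; [lia|]; simpl.
  destruct (Nat.eqb m c) eqn:E.
  - apply Nat.eqb_eq in E; subst.
    rewrite (rsum_ext _ _ (fun _ => 0)), rsum_const; [lra|].
    intros i Hi; destruct (Nat.eqb_spec i c); [lia|reflexivity].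
  - apply Nat.eqb_neq in E; rewrite IH by lia; lra.
Qed.

Lemma rsum_mult_indicator m c g : (c < m)%nat ->
  rsum m (fun i => g i * (if Nat.eqb i c then 1 else 0)) = g c.
Proof.
  intros Hc; rewrite <- (rsum_indicator m c g Hc).
  apply rsum_ext; intros i _; destruct (Nat.eqb i c); lra.
Qed.

Lemma rsum_add_range b a f :
  rsum (a + b) f = rsum a f + rsum b (fun i => f (a + i)%nat).
Proof.
  induction b as [|b IH]; simpl.
  - rewrite Nat.add_0_r; lra.
  - rewrite Nat.add_succ_r; simpl; rewrite IH; lra.
Qed.

Lemma rsum_blocks k q f :
  rsum (k * q) f = rsum k (fun b => rsum q (fun l => f (b * q + l)%nat)).
Proof.
  induction k as [|k IH]; simpl; [reflexivity|].
  replace (q + k * q)%nat with (k * q + q)%nat by lia.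
  rewrite rsum_add_range, IH; reflexivity.
Qed.

Lemma rsum_ge_two_terms m f a b :
  (a < m)%nat -> (b < m)%nat -> a <> b -> (forall i, (i < m)%nat -> 0 <= f i) ->
  f a + f b <= rsum m f.
Proof.
  intros Ha Hb Hab Hf.
  rewrite <- (rsum_indicator m a f Ha), <- (rsum_indicator m b f Hb), <- rsum_plus.
  apply rsum_le; intros i Hi.
  specialize (Hf i Hi).
  destruct (Nat.eqb_spec i a), (Nat.eqb_spec i b); subst; lia || lra.
Qed.

Lemma rsum_square m g : rsum m g ^ 2 = rsum m (fun r => rsum m (fun r' => g r * g r')).
Proof.
  rewrite (rsum_ext m (fun r => rsum m (fun r' => g r * g r')) (fun r => g r * rsum m g)).
  - rewrite (rsum_ext m (fun r => g r * rsum m g) (fun r => rsum m g * g r)), rsum_scal;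
      [ring | intros; ring].
  - intros r _; apply rsum_scal.
Qed.

Lemma rsum_le_1_of_exclusive m (I : nat -> R) :
  (forall j, I j = 0 \/ I j = 1) ->
  (forall j j', (j < m)%nat -> (j' < m)%nat -> j <> j' -> I j + I j' <= 1) ->
  rsum m I <= 1.
Proof.
  revert I; induction m as [|m IH]; intros I H01 Hexcl; simpl; [lra|].
  destruct (H01 m) as [E|E]; rewrite E.
  - assert (rsum m I <= 1) by (apply IH; auto; intros; apply Hexcl; lia); lra.
  - rewrite (rsum_ext m I (fun _ => 0)), rsum_const; [lra|].
    intros j Hj; specialize (Hexcl j m ltac:(lia) ltac:(lia) ltac:(lia)).
    destruct (H01 j); lra.
Qed.

Lemma rprod_ext m f g :
  (forall i, (i < m)%nat -> f i = g i) -> rprod m f = rprod m g.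
Proof.
  revert f g; induction m as [|m IH]; intros f g H; simpl; [reflexivity|].
  rewrite (IH f g) by (intros; apply H; lia).
  rewrite H by lia; reflexivity.
Qed.

Lemma rprod_pos m f : (forall i, (i < m)%nat -> 0 < f i) -> 0 < rprod m f.
Proof.
  induction m as [|m IH]; intros H; simpl; [lra|].
  apply Rmult_lt_0_compat; [apply IH; intros|]; apply H; lia.
Qed.

Lemma rprod_nonneg m f : (forall i, (i < m)%nat -> 0 <= f i) -> 0 <= rprod m f.
Proof.
  induction m as [|m IH]; intros H; simpl; [lra|].
  apply Rmult_le_pos; [apply IH; intros|]; apply H; lia.
Qed.

Lemma rprod_le m f g :
  (forall i, (i < m)%nat -> 0 <= f i <= g i) -> rprod m f <= rprod m g.
Proof.
  revert f g; induction m as [|m IH]; intros f g H; simpl; [lra|].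
  apply Rmult_le_compat.
  - apply rprod_nonneg; intros; apply H; lia.
  - apply H; lia.
  - apply IH; intros; apply H; lia.
  - apply H; lia.
Qed.

Lemma rprod_exp m f : rprod m (fun i => exp (f i)) = exp (rsum m f).
Proof.
  induction m as [|m IH]; simpl; [now rewrite exp_0|].
  now rewrite IH, exp_plus.
Qed.

Lemma rprod_ge_1_minus_rsum m f :
  (forall i, (i < m)%nat -> 0 <= f i <= 1) ->
  1 - rsum m (fun i => 1 - f i) <= rprod m f.
Proof.
  induction m as [|m IH]; intros H; simpl; [lra|].
  assert (1 - rsum m (fun i => 1 - f i) <= rprod m f) by (apply IH; intros; apply H; lia).
  assert (rprod m f <= 1).
  { apply Rle_trans with (rprod m (fun _ => 1)).
    - apply rprod_le; intros; apply H; lia.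
    - clear; induction m; simpl; lra. }
  assert (0 <= rprod m f) by (apply rprod_nonneg; intros; apply H; lia).
  assert (0 <= f m <= 1) by (apply H; lia).
  nra.
Qed.

Lemma rprod_square_div m a b : (forall i, (i < m)%nat -> b i <> 0) ->
  rprod m (fun i => a i ^ 2 / b i) = rprod m a ^ 2 / rprod m b.
Proof.
  induction m as [|m IH]; intros Hb; cbn [rprod]; [field|].
  rewrite IH by (intros; apply Hb; lia).
  assert (rprod m b <> 0).
  { clear IH; induction m as [|m IH]; simpl; [lra|].
    apply Rmult_integral_contrapositive; split; [apply IH|]; intros; apply Hb; lia. }
  assert (b m <> 0) by (apply Hb; lia).
  field; tauto.
Qed.

(** * Sums over the box [{0,...,M-1}^n] *)

Definition update (y : nat -> nat) (b j : nat) : nat -> nat :=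
  fun i => if Nat.eqb i b then j else y i.

Definition in_box (n M : nat) (y : nat -> nat) : Prop := forall i, (i < n)%nat -> (y i < M)%nat.

Lemma update_same y b j : update y b j b = j.
Proof. unfold update; now rewrite Nat.eqb_refl. Qed.

Lemma update_update_same y b x j : update (update y b x) b j = update y b j.
Proof. extensionality i; unfold update; now destruct (Nat.eqb i b). Qed.

Lemma update_comm y b c x j : b <> c -> update (update y c x) b j = update (update y b j) c x.
Proof.
  intros Hbc; extensionality i; unfold update.
  destruct (Nat.eqb_spec i b), (Nat.eqb_spec i c); subst; auto; lia.
Qed.

Lemma in_box_S_update n M y x : in_box n M y -> (x < M)%nat -> in_box (S n) M (update y n x).
Proof.
  unfold in_box, update; intros Hy Hx i Hi.
  destruct (Nat.eqb_spec i n); [assumption | apply Hy; lia].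
Qed.

Lemma in_box_update k q v b l : in_box k q v -> (l < q)%nat -> in_box k q (update v b l).
Proof. intros Hv Hl i Hi; unfold update; destruct (Nat.eqb i b); auto. Qed.

Lemma in_box_mono k m q v : (m <= q)%nat -> in_box k m v -> in_box k q v.
Proof. intros Hmq Hv i Hi; specialize (Hv i Hi); lia. Qed.

Lemma box_sum_S n M F :
  box_sum (S n) M F = rsum M (fun x => box_sum n M (fun y => F (update y n x))).
Proof. reflexivity. Qed.

Lemma box_sum_ext n M F G : (forall y, F y = G y) -> box_sum n M F = box_sum n M G.
Proof. intros H; replace F with G; [reflexivity | extensionality y; auto]. Qed.

Lemma box_sum_le n M F G :
  (forall y, in_box n M y -> F y <= G y) -> box_sum n M F <= box_sum n M G.
Proof.
  revert M F G; induction n as [|n IH]; intros M F G H; simpl.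
  - apply H; intros i Hi; lia.
  - apply rsum_le; intros x Hx; apply IH; intros y Hy.
    apply H, in_box_S_update; assumption.
Qed.

Lemma box_sum_plus n M F G :
  box_sum n M (fun y => F y + G y) = box_sum n M F + box_sum n M G.
Proof.
  revert F G; induction n as [|n IH]; intros; simpl; [reflexivity|].
  rewrite <- rsum_plus; apply rsum_ext; intros; apply IH.
Qed.

Lemma box_sum_scal n M c F : box_sum n M (fun y => c * F y) = c * box_sum n M F.
Proof.
  revert F; induction n as [|n IH]; intros; simpl; [reflexivity|].
  rewrite <- rsum_scal; apply rsum_ext; intros; apply IH.
Qed.

Lemma box_sum_minus n M F G :
  box_sum n M (fun y => F y - G y) = box_sum n M F - box_sum n M G.
Proof.
  rewrite (box_sum_ext n M _ (fun y => F y + (-1) * G y)) by (intros; lra).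
  rewrite box_sum_plus, box_sum_scal; lra.
Qed.

Lemma box_sum_const n M c : box_sum n M (fun _ => c) = INR M ^ n * c.
Proof.
  induction n as [|n IH]; simpl; [lra|].
  rewrite (rsum_ext _ _ (fun _ => INR M ^ n * c)) by (intros; apply IH).
  rewrite rsum_const; lra.
Qed.

Lemma box_sum_rsum n M a (F : nat -> (nat -> nat) -> R) :
  box_sum n M (fun y => rsum a (fun j => F j y)) = rsum a (fun j => box_sum n M (F j)).
Proof.
  induction a as [|a IH]; simpl.
  - now rewrite box_sum_const, Rmult_0_r.
  - now rewrite box_sum_plus, IH.
Qed.

Lemma box_sum_rprod n M (g : nat -> nat -> R) :
  box_sum n M (fun y => rprod n (fun i => g i (y i))) = rprod n (fun i => rsum M (g i)).
Proof.
  revert g; induction n as [|n IH]; intros g; simpl; [reflexivity|].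
  rewrite <- rsum_scal; apply rsum_ext; intros x _.
  rewrite (box_sum_ext n M _ (fun y => g n x * rprod n (fun i => g i (y i)))).
  - rewrite box_sum_scal, IH; lra.
  - intros y; unfold update; rewrite Nat.eqb_refl.
    rewrite (rprod_ext n _ (fun i => g i (y i))); [lra|].
    intros i Hi; destruct (Nat.eqb_spec i n); [lia | reflexivity].
Qed.

Lemma box_sum_resample n M b F : (b < n)%nat ->
  box_sum n M (fun v => rsum M (fun j => F (update v b j))) = INR M * box_sum n M F.
Proof.
  revert M b F; induction n as [|n IH]; intros M b F Hb; [lia|]; rewrite !box_sum_S.
  destruct (Nat.eq_dec b n) as [->|Hbn].
  - rewrite (rsum_ext _ _ (fun _ => box_sum n M (fun y => rsum M (fun j => F (update y n j))))).
    + now rewrite rsum_const, box_sum_rsum.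
    + intros x _; apply box_sum_ext; intros y; apply rsum_ext; intros.
      now rewrite update_update_same.
  - rewrite <- rsum_scal; apply rsum_ext; intros x _.
    rewrite <- (IH M b (fun z => F (update z n x))) by lia.
    apply box_sum_ext; intros y; apply rsum_ext; intros.
    now rewrite update_comm.
Qed.

Lemma box_sum_gt_exists n M F c :
  INR M ^ n * c < box_sum n M F -> exists y, in_box n M y /\ c < F y.
Proof.
  intros H; apply NNPP; intros Hnone.
  assert (box_sum n M F <= box_sum n M (fun _ => c)).
  { apply box_sum_le; intros y Hy; apply Rnot_lt_le; intros Hlt; apply Hnone; eauto. }
  rewrite box_sum_const in *; lra.
Qed.

(** * Truncated Poisson sums *)

Lemma exp_le_compat x y : x <= y -> exp x <= exp y.
Proof. intros [H | ->]; [left; now apply exp_increasing | lra]. Qed.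

Lemma ln_le_compat x y : 0 < x -> x <= y -> ln x <= ln y.
Proof. intros Hx [H | ->]; [left; now apply ln_increasing | lra]. Qed.

Lemma INR_fact_pos y : 0 < INR (fact y).
Proof. apply lt_0_INR, lt_O_fact. Qed.

Definition exp_partial_sum (M : nat) (x : R) : R := rsum M (fun y => x ^ y / INR (fact y)).

Lemma exp_partial_sum_cv x : Un_cv (fun N => exp_partial_sum (S N) x) (exp x).
Proof.
  intros eps Heps.
  assert (Hx : exp_in x (exp x)) by (unfold exp; destruct (exist_exp x); assumption).
  destruct (Hx eps Heps) as [N HN]; exists N; intros n Hn.
  unfold exp_partial_sum, R_dist in *.
  replace (rsum (S n) (fun y => x ^ y / INR (fact y)))
    with (sum_f_R0 (fun i => / INR (fact i) * x ^ i) n); [apply HN; lia|].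
  clear; induction n as [|n IH]; simpl in *; [lra|].
  rewrite IH; unfold Rdiv; ring.
Qed.

Lemma exp_tail_bounds M mu U : 0 <= mu <= U ->
  0 <= exp mu - exp_partial_sum M mu <= exp U - exp_partial_sum M U.
Proof.
  intros Hmu.
  set (tail := fun x N => exp_partial_sum (S (N + M)) x - exp_partial_sum M x).
  assert (Hcv : forall x, Un_cv (tail x) (exp x - exp_partial_sum M x)).
  { intros x eps Heps; destruct (exp_partial_sum_cv x eps Heps) as [N HN].
    exists N; intros n Hn; unfold tail, R_dist.
    replace (_ - _ - _) with (exp_partial_sum (S (n + M)) x - exp x) by ring.
    apply HN; lia. }
  assert (Htail : forall x N,
            tail x N = rsum (S N) (fun i => x ^ (M + i) / INR (fact (M + i)))).
  { intros; unfold tail, exp_partial_sum.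
    replace (S (N + M)) with (M + S N)%nat by lia; rewrite rsum_add_range; lra. }
  assert (Hcoef : forall i, 0 < / INR (fact i)) by (intros; apply Rinv_0_lt_compat, INR_fact_pos).
  split.
  - apply (Rle_cv_lim (Un := fun _ => 0) (Vn := tail mu)); [| | apply Hcv].
    2: { intros e He; exists O; intros; unfold R_dist.
         rewrite Rminus_diag, Rabs_R0; lra. }
    intros N; rewrite Htail; apply rsum_nonneg; intros i _.
    apply Rmult_le_pos; [apply pow_le; lra | left; apply Hcoef].
  - apply (Rle_cv_lim (Un := tail mu) (Vn := tail U)); [| apply Hcv | apply Hcv].
    intros N; rewrite !Htail; apply rsum_le; intros i _.
    apply Rmult_le_compat_r; [left; apply Hcoef | apply pow_incr; lra].
Qed.

Lemma exp_tail_small U eps : 0 < eps -> exists M, exp U - exp_partial_sum M U < eps.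
Proof.
  intros Heps; destruct (exp_partial_sum_cv U eps Heps) as [N HN].
  exists (S N); specialize (HN N (le_n _)); unfold R_dist in HN.
  apply Rabs_def2 in HN; lra.
Qed.

Lemma poisson_pmf_pos mu y : 0 < mu -> 0 < poisson_pmf mu y.
Proof.
  intros; unfold poisson_pmf; apply Rdiv_lt_0_compat; [|apply INR_fact_pos].
  apply Rmult_lt_0_compat; [apply exp_pos | now apply pow_lt].
Qed.

Lemma poisson_pmf_nonneg mu y : 0 <= mu -> 0 <= poisson_pmf mu y.
Proof.
  intros; unfold poisson_pmf, Rdiv.
  apply Rmult_le_pos; [apply Rmult_le_pos; [left; apply exp_pos | now apply pow_le]|].
  left; apply Rinv_0_lt_compat, INR_fact_pos.
Qed.

Lemma poisson_mass_bounds M mu U : 0 <= mu <= U ->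
  1 - (exp U - exp_partial_sum M U) <= rsum M (poisson_pmf mu) <= 1.
Proof.
  intros Hmu.
  replace (rsum M (poisson_pmf mu)) with (exp (- mu) * exp_partial_sum M mu)
    by (unfold exp_partial_sum; rewrite <- rsum_scal; apply rsum_ext; intros;
        unfold poisson_pmf, Rdiv; ring).
  destruct (exp_tail_bounds M mu U Hmu).
  assert (exp (- mu) * exp mu = 1) by (rewrite <- exp_plus, Rplus_opp_l; apply exp_0).
  assert (0 < exp (- mu)) by apply exp_pos.
  assert (exp (- mu) <= 1) by (rewrite <- exp_0; apply exp_le_compat; lra).
  split; nra.
Qed.

(* For Poisson laws, [1 + chi^2(P_a, P_b) = exp ((a - b)^2 / b)]; truncation only lowers it. *)
Lemma poisson_chi2_le M a b : 0 <= a -> 0 < b ->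
  rsum M (fun y => poisson_pmf a y ^ 2 / poisson_pmf b y) <= exp ((a - b) ^ 2 / b).
Proof.
  intros Ha Hb.
  assert (E : forall y, poisson_pmf a y ^ 2 / poisson_pmf b y
                        = exp (- 2 * a + b) * ((a * a / b) ^ y / INR (fact y))).
  { intros y; unfold poisson_pmf.
    replace (exp (-2 * a + b)) with (exp (- a) * exp (- a) / exp (- b))
      by (unfold Rdiv; rewrite <- exp_Ropp, <- !exp_plus; f_equal; ring).
    assert (0 < INR (fact y)) by apply INR_fact_pos.
    assert (0 < b ^ y) by (now apply pow_lt).
    assert (0 < exp (- b)) by apply exp_pos.
    unfold Rdiv; rewrite !Rpow_mult_distr, !pow_inv; field; repeat split; lra. }
  rewrite (rsum_ext M _ _ (fun y _ => E y)), rsum_scal.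
  replace ((a - b) ^ 2 / b) with (-2 * a + b + a * a / b) by (field; lra).
  rewrite (exp_plus (-2 * a + b) (a * a / b)).
  apply Rmult_le_compat_l; [left; apply exp_pos|].
  assert (0 <= a * a / b) by (apply Rmult_le_pos; [nra | left; now apply Rinv_0_lt_compat]).
  destruct (exp_tail_bounds M _ _ (conj H (Rle_refl (a * a / b)))).
  unfold exp_partial_sum in *; lra.
Qed.

(** * The frame [D] *)

Lemma sqrt_INR_pos m : (1 <= m)%nat -> 0 < sqrt (INR m).
Proof. intros; apply sqrt_lt_R0, lt_0_INR; lia. Qed.

(* Orthogonality to [d_1 = p^{-1/2} (1,...,1)]. *)
Lemma orthonormal_D_col_sum p D c : orthonormal_D p D -> (1 <= c < p)%nat ->
  rsum p (fun i => D i c) = 0.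
Proof.
  intros [Horth Hd1] Hc.
  specialize (Horth O c ltac:(lia) ltac:(lia)).
  replace (Nat.eqb 0 c) with false in Horth by (symmetry; apply Nat.eqb_neq; lia).
  rewrite (rsum_ext p _ (fun i => / sqrt (INR p) * D i c)), rsum_scal in Horth
    by (intros; now rewrite Hd1).
  assert (0 < / sqrt (INR p)) by (apply Rinv_0_lt_compat, sqrt_INR_pos; lia).
  nra.
Qed.

Lemma bessel_Dbar p D K x : orthonormal_D p D -> (K <= p - 1)%nat ->
  rsum K (fun r => DbarT_apply p D x r ^ 2) <= rsum p (fun i => x i ^ 2).
Proof.
  intros [Horth _] HK.
  set (a := DbarT_apply p D x).
  set (proj := fun i => rsum K (fun r => a r * D i (S r))).
  assert (Hres : 0 <= rsum p (fun i => (x i - proj i) ^ 2))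
    by (apply rsum_nonneg; intros; apply pow2_ge_0).
  rewrite (rsum_ext p _ (fun i => x i ^ 2 - 2 * (x i * proj i) + proj i ^ 2)) in Hres
    by (intros; ring).
  rewrite rsum_plus, rsum_minus, rsum_scal in Hres.
  assert (Hcross : rsum p (fun i => x i * proj i) = rsum K (fun r => a r ^ 2)).
  { unfold proj.
    rewrite (rsum_ext p _ (fun i => rsum K (fun r => a r * (D i (S r) * x i))))
      by (intros; rewrite <- rsum_scal; apply rsum_ext; intros; ring).
    rewrite rsum_exchange; apply rsum_ext; intros r _.
    rewrite rsum_scal; unfold a, DbarT_apply; ring. }
  assert (Hproj : rsum p (fun i => proj i ^ 2) = rsum K (fun r => a r ^ 2)).
  { unfold proj.
    rewrite (rsum_ext p _ (fun i => rsum K (fun r => rsum K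
               (fun r' => a r * a r' * (D i (S r) * D i (S r'))))))
      by (intros; rewrite rsum_square; apply rsum_ext; intros; apply rsum_ext; intros; ring).
    rewrite rsum_exchange; apply rsum_ext; intros r Hr.
    rewrite rsum_exchange.
    rewrite (rsum_ext K _ (fun r' => a r * a r' * (if Nat.eqb r' r then 1 else 0))).
    - rewrite rsum_mult_indicator by assumption; ring.
    - intros r' Hr'; rewrite rsum_scal, Horth by lia.
      destruct (Nat.eqb_spec (S r) (S r')), (Nat.eqb_spec r' r); subst; try lia; ring. }
  rewrite Hcross, Hproj in Hres; lra.
Qed.

(** * Counting nonzero entries *)

Definition nz_indicator (x : R) : nat := if Req_EM_T x 0 then 0%nat else 1%nat.

Lemma nnz_S m u : nnz (S m) u = (nnz m u + nz_indicator (u m))%nat.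
Proof.
  unfold nnz, nz_indicator; rewrite seq_S, filter_app, length_app; simpl.
  destruct (Req_EM_T (u m) 0); simpl; lia.
Qed.

Lemma nnz_ext m u w : (forall j, (j < m)%nat -> u j = w j) -> nnz m u = nnz m w.
Proof.
  revert u w; induction m as [|m IH]; intros u w H; [reflexivity|].
  rewrite !nnz_S, (IH u w) by (intros; apply H; lia).
  rewrite H by lia; reflexivity.
Qed.

Lemma nnz_scal m (c : R) (u : nat -> R) : (nnz m (fun j => (c * u j)%R) <= nnz m u)%nat.
Proof.
  induction m as [|m IH]; [reflexivity|].
  rewrite !nnz_S; unfold nz_indicator.
  destruct (Req_EM_T (c * u m) 0), (Req_EM_T (u m) 0); try lia.
  rewrite e in n; lra.
Qed.

Lemma nnz_le_support m u (l : list nat) :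
  (forall j, (j < m)%nat -> u j <> 0 -> In j l) -> (nnz m u <= length l)%nat.
Proof.
  intros Hsupp; unfold nnz; apply NoDup_incl_length.
  - apply NoDup_filter, seq_NoDup.
  - intros j Hj; apply filter_In in Hj as [Hj Hnz]; apply in_seq in Hj.
    apply Hsupp; [lia|]; destruct (Req_EM_T (u j) 0); [discriminate | assumption].
Qed.

Definition kron (a b : nat) : R := if Nat.eqb a b then 1 else 0.

Lemma rsum_mult_kron m g c : (c < m)%nat -> rsum m (fun j => g j * kron j c) = g c.
Proof. apply rsum_mult_indicator. Qed.

Lemma nnz_zero m : nnz m (fun _ => 0) = 0%nat.
Proof.
  induction m as [|m IH]; [reflexivity|].
  rewrite nnz_S, IH; unfold nz_indicator; destruct (Req_EM_T 0 0); [reflexivity | lra].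
Qed.

Lemma nnz_add m l u : nnz (m + l) u = (nnz m u + nnz l (fun i => u (m + i)%nat))%nat.
Proof.
  induction l as [|l IH]; [unfold nnz at 3; simpl; now rewrite Nat.add_0_r|].
  rewrite Nat.add_succ_r, !nnz_S, IH; lia.
Qed.

Lemma nnz_kron q c : (c < q)%nat -> nnz q (fun l => kron l c) = 1%nat.
Proof.
  induction q as [|q IH]; intros Hc; [lia|].
  rewrite nnz_S; unfold nz_indicator.
  destruct (Nat.eqb_spec q c) as [->|Hqc].
  - rewrite (nnz_ext _ _ (fun _ => 0)), nnz_zero.
    + unfold kron; rewrite Nat.eqb_refl; destruct (Req_EM_T 1 0); [lra | reflexivity].
    + intros j Hj; unfold kron; destruct (Nat.eqb_spec j c); [lia | reflexivity].
  - rewrite IH by lia; unfold kron.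
    destruct (Nat.eqb_spec q c); [lia|]; destruct (Req_EM_T 0 0); [lia | lra].
Qed.

Lemma sqnorm_kron_diff m (x : R) c c' : (c < m)%nat -> (c' < m)%nat -> c <> c' ->
  sqnorm m (fun j => x * (kron j c - kron j c')) = 2 * x ^ 2.
Proof.
  intros Hc Hc' Hcc'; unfold sqnorm.
  rewrite (rsum_ext m _ (fun j => x ^ 2 * (kron j c + kron j c'))).
  - rewrite rsum_scal, rsum_plus; unfold kron; rewrite !rsum_indicator by assumption; ring.
  - intros j _; unfold kron.
    destruct (Nat.eqb_spec j c), (Nat.eqb_spec j c'); subst; try lia; ring.
Qed.

Lemma nnz_kron_diff m (x : R) c c' : (nnz m (fun j => (x * (kron j c - kron j c'))%R) <= 2)%nat.
Proof.
  apply (nnz_le_support m _ [c; c']); intros j _ Hj; unfold kron in Hj.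
  destruct (Nat.eqb_spec j c), (Nat.eqb_spec j c'); simpl; auto; lra.
Qed.

(** * Block one-hot vectors *)

(* Coordinates [0 .. k q - 1] are cut into [k] blocks of length [q]; block [b] carries a single
   [1], at offset [v b]. *)
Definition onehot_blocks (k q : nat) (v : nat -> nat) (j : nat) : R :=
  if andb (Nat.ltb j (k * q)) (Nat.eqb (j mod q)%nat (v (j / q)%nat)) then 1 else 0.

Lemma div_mod_block q b l : (l < q)%nat -> ((b * q + l) / q = b /\ (b * q + l) mod q = l)%nat.
Proof.
  intros Hl; split.
  - symmetry; apply (Nat.div_unique _ _ _ l); lia.
  - symmetry; apply (Nat.mod_unique _ _ b); lia.
Qed.

Lemma block_index_inj q B L b l : (L < q)%nat -> (l < q)%nat ->
  (B * q + L = b * q + l)%nat -> B = b /\ L = l.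
Proof.
  intros HL Hl Heq.
  destruct (div_mod_block q B L HL) as [E1 E2], (div_mod_block q b l Hl) as [E3 E4].
  rewrite Heq in E1, E2; split; congruence.
Qed.

Lemma onehot_blocks_in k q v b l : (b < k)%nat -> (l < q)%nat ->
  onehot_blocks k q v (b * q + l) = kron l (v b).
Proof.
  intros Hb Hl; unfold onehot_blocks.
  destruct (div_mod_block q b l Hl) as [-> ->].
  replace (Nat.ltb (b * q + l) (k * q)) with true by (symmetry; apply Nat.ltb_lt; nia).
  reflexivity.
Qed.

Lemma onehot_blocks_out k q v j : (k * q <= j)%nat -> onehot_blocks k q v j = 0.
Proof.
  intros Hj; unfold onehot_blocks.
  replace (Nat.ltb j (k * q)) with false by (symmetry; now apply Nat.ltb_ge).
  reflexivity.
Qed.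

Lemma onehot_blocks_01 k q v j : onehot_blocks k q v j = 0 \/ onehot_blocks k q v j = 1.
Proof. unfold onehot_blocks; destruct andb; auto. Qed.

Lemma nnz_onehot_blocks k q v m : (forall b, (b < k)%nat -> (v b < q)%nat) ->
  (k * q <= m)%nat -> nnz m (onehot_blocks k q v) = k.
Proof.
  intros Hv Hm.
  assert (Hblocks : forall b, (b <= k)%nat -> nnz (b * q) (onehot_blocks k q v) = b).
  { induction b as [|b IH]; intros Hb; [reflexivity|].
    replace (S b * q)%nat with (b * q + q)%nat by lia.
    rewrite nnz_add, IH by lia.
    rewrite (nnz_ext _ _ (fun l => kron l (v b))), nnz_kron by (intros; apply onehot_blocks_in || apply Hv; lia).
    lia. }
  replace m with (k * q + (m - k * q))%nat by lia.
  rewrite nnz_add, Hblocks by lia.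
  rewrite (nnz_ext _ _ (fun _ => 0)), nnz_zero by (intros; apply onehot_blocks_out; lia).
  lia.
Qed.

Lemma onehot_blocks_update_diff k q v b l l' j : (b < k)%nat -> (l < q)%nat -> (l' < q)%nat ->
  onehot_blocks k q (update v b l) j - onehot_blocks k q (update v b l') j
  = kron j (b * q + l) - kron j (b * q + l').
Proof.
  intros Hb Hl Hl'; unfold kron.
  destruct (Nat.lt_ge_cases j (k * q)) as [Hj|Hj].
  - assert (HqP : (0 < q)%nat) by lia.
    pose proof (Nat.div_mod_eq j q) as Hdec.
    assert (HB : (j / q < k)%nat) by (apply Nat.Div0.div_lt_upper_bound; lia).
    assert (HL : (j mod q < q)%nat) by (apply Nat.mod_upper_bound; lia).
    set (B := (j / q)%nat) in *; set (L := (j mod q)%nat) in *; clearbody B L.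
    replace j with (B * q + L)%nat by lia.
    rewrite !onehot_blocks_in by assumption; unfold kron, update.
    destruct (Nat.eqb_spec B b) as [->|HBb].
    + destruct (Nat.eqb_spec L l), (Nat.eqb_spec L l'),
        (Nat.eqb_spec (b * q + L) (b * q + l)), (Nat.eqb_spec (b * q + L) (b * q + l'));
        try lra; lia.
    + destruct (Nat.eqb_spec (B * q + L) (b * q + l)) as [E|];
        [apply block_index_inj in E; tauto|].
      destruct (Nat.eqb_spec (B * q + L) (b * q + l')) as [E|];
        [apply block_index_inj in E; tauto|].
      lra.
  - rewrite !onehot_blocks_out by lia.
    destruct (Nat.eqb_spec j (b * q + l)), (Nat.eqb_spec j (b * q + l')); try nia; lra.
Qed.

(** * Sparse localization *)

Lemma fold_Rmax_ge_elem l a x : In x l -> x <= fold_right Rmax a l.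
Proof.
  induction l as [|y l IH]; intros Hx; simpl in *; [contradiction|].
  destruct Hx as [->|Hx]; [apply Rmax_l | eapply Rle_trans; [now apply IH | apply Rmax_r]].
Qed.

Lemma fold_Rmax_cases l a : fold_right Rmax a l = a \/ In (fold_right Rmax a l) l.
Proof.
  induction l as [|x l IH]; simpl; auto.
  destruct (Rle_or_lt x (fold_right Rmax a l)).
  - rewrite Rmax_right by assumption; destruct IH; auto.
  - rewrite Rmax_left by lra; auto.
Qed.

Lemma in_ternary_vectors l : (forall x, In x l -> x = -1 \/ x = 0 \/ x = 1) ->
  In l (ternary_vectors (length l)).
Proof.
  induction l as [|a l IH]; intros H; simpl; auto.
  apply in_flat_map; exists l; split; [apply IH; intros; apply H; simpl; auto|].
  destruct (H a (or_introl eq_refl)) as [->|[->| ->]]; simpl; auto.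
Qed.

Lemma lambda_loc_ge p D k (u : nat -> R) :
  nnz (p - 1) u = k -> (forall j, u j = 0 \/ u j = 1) ->
  forall i, (i < p)%nat -> Rabs (rsum (p - 1) (fun j => D i (S j) * u j)) <= lambda_loc p D k.
Proof.
  intros Hnnz H01 i Hi.
  set (L := map u (seq 0 (p - 1))).
  assert (HL : length L = (p - 1)%nat) by (unfold L; now rewrite length_map, length_seq).
  assert (Hnth : forall j, (j < p - 1)%nat -> nth j L 0 = u j).
  { intros; unfold L; rewrite (nth_indep _ 0 (u O)) by (now rewrite length_map, length_seq).
    rewrite map_nth, seq_nth; auto. }
  apply Rle_trans with (Dbar_apply_inf_norm p D L).
  - apply fold_Rmax_ge_elem, in_map_iff; exists i; split; [|apply in_seq; lia].
    f_equal; apply rsum_ext; intros; now rewrite Hnth.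
  - apply fold_Rmax_ge_elem, in_map, filter_In; split.
    + rewrite <- HL; apply in_ternary_vectors; intros x Hx.
      unfold L in Hx; apply in_map_iff in Hx as [j [<- _]]; destruct (H01 j); auto.
    + apply Nat.eqb_eq; rewrite <- Hnnz; unfold nnz_list, nnz, L.
      clear; induction (seq 0 (p - 1)) as [|j l IH]; simpl; [reflexivity|].
      destruct (Req_EM_T (u j) 0); simpl; auto.
Qed.

(** * Decoding *)

Lemma DbarT_apply_minus p D g h j :
  DbarT_apply p D (fun i => g i - h i) j = DbarT_apply p D g j - DbarT_apply p D h j.
Proof. unfold DbarT_apply; rewrite <- rsum_minus; apply rsum_ext; intros; ring. Qed.

Definition block_dist (p : nat) (D : nat -> nat -> R) (t : R) (q : nat) (g : nat -> R)
    (b j : nat) : R :=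
  rsum q (fun l => (DbarT_apply p D g (b * q + l) - t * kron l j) ^ 2).

Definition decode (p : nat) (D : nat -> nat -> R) (t : R) (q : nat) (g : nat -> R)
    (b j : nat) : R :=
  if Rlt_dec (block_dist p D t q g b j) (t ^ 2 / 2) then 1 else 0.

Lemma decode_01 p D t q g b j : decode p D t q g b j = 0 \/ decode p D t q g b j = 1.
Proof. unfold decode; destruct Rlt_dec; auto. Qed.

(* The points [t e_j] are [sqrt 2 t] apart, so two decoding balls of radius [t / sqrt 2] are
   disjoint. *)
Lemma decode_exclusive p D t q g b j j' : (j < q)%nat -> (j' < q)%nat -> j <> j' ->
  decode p D t q g b j + decode p D t q g b j' <= 1.
Proof.
  intros Hj Hj' Hjj'; unfold decode, block_dist.
  destruct (Rlt_dec _ _) as [H1|]; destruct (Rlt_dec _ _) as [H2|]; try lra.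
  exfalso.
  set (a := fun l => DbarT_apply p D g (b * q + l)).
  assert (Htri : rsum q (fun l => (t * kron l j - t * kron l j') ^ 2)
                 <= 2 * rsum q (fun l => (a l - t * kron l j) ^ 2)
                    + 2 * rsum q (fun l => (a l - t * kron l j') ^ 2)).
  { rewrite <- !rsum_scal, <- rsum_plus; apply rsum_le; intros l _.
    pose proof (pow2_ge_0 (2 * a l - t * kron l j - t * kron l j')); nra. }
  pose proof (rsum_ge_two_terms q (fun l => (t * kron l j - t * kron l j') ^ 2) j j' Hj Hj' Hjj'
                (fun l _ => pow2_ge_0 _)) as Hjj.
  cbv beta in Hjj; unfold kron in Hjj at 1 2 3 4.
  rewrite !Nat.eqb_refl in Hjj.
  destruct (Nat.eqb_spec j j'), (Nat.eqb_spec j' j); try lia.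
  unfold a in Htri; nra.
Qed.

Lemma decode_sum_le_1 p D t q g b m : (m <= q)%nat ->
  rsum m (fun j => decode p D t q g b j) <= 1.
Proof.
  intros Hm; apply rsum_le_1_of_exclusive; [intros; apply decode_01|].
  intros j j' Hj Hj' Hjj'; apply decode_exclusive; lia.
Qed.

(** * The packing *)

(* [f_v = p^{-1} 1 + t Dbar u_v]: uniform mass plus a [k]-sparse perturbation in the [Dbar]
   coordinates, so that [Dbar^T f_v = t u_v]. *)
Definition packing_density (p : nat) (D : nat -> nat -> R) (t : R) (k q : nat)
    (v : nat -> nat) (i : nat) : R :=
  / INR p + t * rsum (p - 1) (fun j => D i (S j) * onehot_blocks k q v j).

Section Packing.

Variables (p : nat) (D : nat -> nat -> R) (t : R) (k q : nat).
Hypothesis HD : orthonormal_D p D.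
Hypothesis Hp : (1 <= p)%nat.

Let f v := packing_density p D t k q v.

Lemma DbarT_packing_density v j : (j < p - 1)%nat ->
  DbarT_apply p D (f v) j = t * onehot_blocks k q v j.
Proof.
  intros Hj; destruct HD as [Horth _]; unfold DbarT_apply, f, packing_density.
  rewrite (rsum_ext p _ (fun i => / INR p * D i (S j)
             + t * rsum (p - 1) (fun j' => onehot_blocks k q v j' * (D i (S j) * D i (S j')))))
    by (intros; rewrite Rmult_plus_distr_l, <- !rsum_scal; f_equal; [ring|];
        apply rsum_ext; intros; ring).
  rewrite rsum_plus, !rsum_scal, orthonormal_D_col_sum, rsum_exchange by (auto; lia).
  rewrite (rsum_ext _ _ (fun j' => onehot_blocks k q v j' * (if Nat.eqb j' j then 1 else 0))).
  - rewrite rsum_mult_indicator by assumption; ring.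
  - intros j' Hj'; rewrite rsum_scal, Horth by lia.
    destruct (Nat.eqb_spec (S j) (S j')), (Nat.eqb_spec j' j); try lia; reflexivity.
Qed.

Lemma packing_density_sum v : rsum p (f v) = 1.
Proof.
  unfold f, packing_density.
  rewrite rsum_plus, rsum_const, rsum_scal, rsum_exchange.
  rewrite (rsum_ext _ _ (fun _ => 0)), rsum_const.
  - field; apply not_0_INR; lia.
  - intros j Hj.
    rewrite (rsum_ext p _ (fun i => onehot_blocks k q v j * D i (S j))), rsum_scal
      by (intros; ring).
    rewrite orthonormal_D_col_sum by (auto; lia); ring.
Qed.

Hypothesis Ht : 0 <= t.
Hypothesis Hkq : (k * q <= p - 1)%nat.
Hypothesis Htlambda : t * lambda_loc p D k <= / INR p.

Lemma packing_density_nonneg v : in_box k q v ->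
  forall i, (i < p)%nat -> 0 <= f v i.
Proof.
  intros Hv i Hi; unfold f, packing_density.
  set (x := rsum (p - 1) (fun j => D i (S j) * onehot_blocks k q v j)).
  assert (Hx : Rabs x <= lambda_loc p D k).
  { apply lambda_loc_ge; [apply nnz_onehot_blocks | intros; apply onehot_blocks_01 |]; auto. }
  pose proof (Rle_abs (- x)) as Habs; rewrite Rabs_Ropp in Habs.
  assert (t * Rabs x <= / INR p) by (eapply Rle_trans; [apply Rmult_le_compat_l|]; eauto).
  nra.
Qed.

Lemma packing_density_in_F s v : (k <= s)%nat -> in_box k q v ->
  in_F p s D (f v).
Proof.
  intros Hks Hv; split; [|split].
  - now apply packing_density_nonneg.
  - rewrite <- (packing_density_sum v); apply rsum_ext; intros.
    apply Rabs_right, Rle_ge; now apply packing_density_nonneg.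
  - rewrite (nnz_ext _ _ (fun j => t * onehot_blocks k q v j))
      by (intros; now apply DbarT_packing_density).
    eapply Nat.le_trans; [apply nnz_scal|].
    rewrite nnz_onehot_blocks; auto.
Qed.

Lemma packing_density_update_diff v b l l' i : (b < k)%nat -> (l < q)%nat -> (l' < q)%nat ->
  f (update v b l) i - f (update v b l') i = t * (D i (S (b * q + l)) - D i (S (b * q + l'))).
Proof.
  intros Hb Hl Hl'; unfold f, packing_density.
  replace (_ - _) with (t * rsum (p - 1) (fun j => D i (S j) * (onehot_blocks k q (update v b l) j
                                                    - onehot_blocks k q (update v b l') j)))
    by (rewrite (rsum_ext _ _ (fun j => D i (S j) * onehot_blocks k q (update v b l) j
                                  - D i (S j) * onehot_blocks k q (update v b l') j)),
          rsum_minus by (intros; ring); ring).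
  rewrite (rsum_ext _ _ (fun j => D i (S j) * kron j (b * q + l) - D i (S j) * kron j (b * q + l')))
    by (intros; rewrite onehot_blocks_update_diff by assumption; ring).
  rewrite rsum_minus, !rsum_mult_kron by nia; reflexivity.
Qed.

(* Bessel's inequality restricted to the [k q] coordinates of the packing. *)
Lemma sqnorm_ge_decoding_errors v (g : nat -> R) : in_box k q v ->
  t ^ 2 / 2 * rsum k (fun b => 1 - decode p D t q g b (v b)) <= sqnorm p (fun j => g j - f v j).
Proof.
  intros Hv; unfold sqnorm.
  eapply Rle_trans; [| apply (bessel_Dbar p D (k * q)); auto].
  rewrite rsum_blocks, <- rsum_scal; apply rsum_le; intros b Hb.
  apply Rle_trans with (block_dist p D t q g b (v b)).
  - assert (0 <= block_dist p D t q g b (v b))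
      by (apply rsum_nonneg; intros; apply pow2_ge_0).
    unfold decode; destruct Rlt_dec; lra.
  - right; unfold block_dist; apply rsum_ext; intros l Hl; f_equal.
    rewrite DbarT_apply_minus, DbarT_packing_density, onehot_blocks_in by (auto; nia).
    reflexivity.
Qed.

End Packing.

(** * The Poisson model *)

Definition intensity (p : nat) (T : R) (A : nat -> nat -> R) (f : nat -> R) (i : nat) : R :=
  T * rsum p (fun j => A i j * f j).

Definition likelihood (n p : nat) (T : R) (A : nat -> nat -> R) (f : nat -> R)
    (y : nat -> nat) : R :=
  rprod n (fun i => poisson_pmf (intensity p T A f i) (y i)).

Lemma likelihood_pos n p T A f y :
  (forall i, (i < n)%nat -> 0 < intensity p T A f i) -> 0 < likelihood n p T A f y.
Proof. intros H; apply rprod_pos; intros; now apply poisson_pmf_pos, H. Qed.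

Lemma likelihood_mass_bounds n p M T A f :
  (forall i, (i < n)%nat -> 0 <= intensity p T A f i <= T) ->
  1 - INR n * (exp T - exp_partial_sum M T) <= box_sum n M (likelihood n p T A f) <= 1.
Proof.
  intros Hmu; unfold likelihood.
  rewrite (box_sum_rprod n M (fun i => poisson_pmf (intensity p T A f i))).
  assert (Hmass : forall i, (i < n)%nat ->
            0 <= rsum M (poisson_pmf (intensity p T A f i)) <= 1).
  { intros i Hi; split; [apply rsum_nonneg; intros; apply poisson_pmf_nonneg, Hmu; auto|].
    now apply (poisson_mass_bounds M _ T), Hmu. }
  split.
  - eapply Rle_trans; [| apply rprod_ge_1_minus_rsum; assumption].
    rewrite <- rsum_const.
    assert (rsum n (fun i => 1 - rsum M (poisson_pmf (intensity p T A f i)))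
            <= rsum n (fun _ => exp T - exp_partial_sum M T)); [|lra].
    apply rsum_le; intros i Hi.
    destruct (poisson_mass_bounds M (intensity p T A f i) T); auto; lra.
  - apply Rle_trans with (rprod n (fun _ => 1)); [now apply rprod_le|].
    clear; induction n; simpl; lra.
Qed.

Lemma likelihood_chi2_le n p M T A f1 f0 :
  (forall i, (i < n)%nat -> 0 < intensity p T A f0 i) ->
  (forall i, (i < n)%nat -> 0 <= intensity p T A f1 i) ->
  box_sum n M (fun y => likelihood n p T A f1 y ^ 2 / likelihood n p T A f0 y)
  <= exp (rsum n (fun i => (intensity p T A f1 i - intensity p T A f0 i) ^ 2
                           / intensity p T A f0 i)).
Proof.
  intros H0 H1.
  set (mu1 := intensity p T A f1); set (mu0 := intensity p T A f0).
  rewrite (box_sum_ext n M _ (fun y => rprod n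
             (fun i => poisson_pmf (mu1 i) (y i) ^ 2 / poisson_pmf (mu0 i) (y i)))).
  - rewrite (box_sum_rprod n M (fun i yi => poisson_pmf (mu1 i) yi ^ 2 / poisson_pmf (mu0 i) yi)).
    rewrite <- rprod_exp; apply rprod_le; intros i Hi; split.
    + apply rsum_nonneg; intros; apply Rmult_le_pos; [apply pow2_ge_0|].
      left; now apply Rinv_0_lt_compat, poisson_pmf_pos, H0.
    + now apply poisson_chi2_le; [apply H1 | apply H0].
  - intros y; unfold likelihood; rewrite rprod_square_div; [reflexivity|].
    intros; now apply Rgt_not_eq, poisson_pmf_pos, H0.
Qed.

Section Sensing.

Variables (n p s : nat) (a_l a_u T delta : R) (D At : nat -> nat -> R).
Hypotheses (Hlu : a_l < a_u) (Hn : (1 <= n)%nat) (HT : 0 < T).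
Hypothesis HA1 : assumption1 n p a_l a_u At.
Hypothesis HA2 : assumption2 n p s At D delta.

Let A := A_of n a_l a_u At.

Lemma A_of_bounds i j : (i < n)%nat -> (j < p)%nat -> / (2 * INR n) <= A i j <= / INR n.
Proof.
  intros Hi Hj; specialize (HA1 i j Hi Hj); unfold A, A_of.
  assert (Hs : 0 < sqrt (INR n)) by now apply sqrt_INR_pos.
  assert (Hss : sqrt (INR n) * sqrt (INR n) = INR n) by apply sqrt_sqrt, pos_INR.
  set (r := sqrt (INR n)) in *; rewrite <- Hss; destruct HA1 as [Hl Hu].
  assert (Hd : 0 < / (2 * (a_u - a_l) * r)) by (apply Rinv_0_lt_compat; nra).
  split.
  - apply Rle_trans with ((a_l / r + (a_u - 2 * a_l) / r) / (2 * (a_u - a_l) * r)).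
    + right; field; lra.
    + unfold Rdiv at 3 4; apply Rmult_le_compat_r; lra.
  - apply Rle_trans with ((a_u / r + (a_u - 2 * a_l) / r) / (2 * (a_u - a_l) * r)).
    + unfold Rdiv at 3 4; apply Rmult_le_compat_r; lra.
    + right; field; lra.
Qed.

Lemma intensity_bounds f i : (i < n)%nat ->
  (forall j, (j < p)%nat -> 0 <= f j) -> rsum p f = 1 ->
  T / (2 * INR n) <= intensity p T A f i <= T.
Proof.
  intros Hi Hf Hsum; unfold intensity.
  assert (1 <= INR n) by (apply (le_INR 1); assumption).
  split.
  - replace (T / (2 * INR n)) with (T * rsum p (fun j => / (2 * INR n) * f j))
      by (rewrite rsum_scal, Hsum; field; lra).
    apply Rmult_le_compat_l; [lra|]; apply rsum_le; intros j Hj.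
    apply Rmult_le_compat_r; [auto | now apply A_of_bounds].
  - rewrite <- (Rmult_1_r T) at 2; apply Rmult_le_compat_l; [lra|].
    rewrite <- Hsum; apply rsum_le; intros j Hj.
    destruct (A_of_bounds i j Hi Hj).
    assert (/ INR n <= 1) by (rewrite <- Rinv_1; apply Rinv_le_contravar; lra).
    assert (0 < / (2 * INR n)) by (apply Rinv_0_lt_compat; lra).
    specialize (Hf j Hj); nra.
Qed.

(* Only [Atilde] sees the difference of two densities of equal mass. *)
Lemma intensity_diff f1 f0 i : rsum p f1 = rsum p f0 ->
  intensity p T A f1 i - intensity p T A f0 i
  = T / (2 * (a_u - a_l) * sqrt (INR n)) * rsum p (fun j => At i j * (f1 j - f0 j)).
Proof.
  intros Hmass; unfold intensity, A, A_of.
  assert (Hs : 0 < sqrt (INR n)) by now apply sqrt_INR_pos.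
  set (c := (a_u - 2 * a_l) / sqrt (INR n)); set (d := 2 * (a_u - a_l) * sqrt (INR n)).
  assert (Hd : d <> 0) by (unfold d; apply Rmult_integral_contrapositive; split; lra).
  rewrite <- Rmult_minus_distr_l, <- rsum_minus.
  rewrite (rsum_ext p _ (fun j => / d * (At i j * (f1 j - f0 j)) + c / d * (f1 j - f0 j)))
    by (intros; field; assumption).
  rewrite rsum_plus, !rsum_scal, rsum_minus, Hmass.
  field; assumption.
Qed.

Lemma chi2_intensity_le f1 f0 (w : nat -> R) :
  (forall j, (j < p)%nat -> 0 <= f0 j) -> rsum p f0 = 1 -> rsum p f1 = 1 ->
  (nnz p w <= 2 * s)%nat ->
  (forall j, (j < p)%nat -> f1 j - f0 j = rsum p (fun l => D j l * w l)) ->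
  rsum n (fun i => (intensity p T A f1 i - intensity p T A f0 i) ^ 2 / intensity p T A f0 i)
  <= T * (1 + delta) * sqnorm p w / (2 * (a_u - a_l) ^ 2).
Proof.
  intros Hf0 H0 H1 Hw Hdiff.
  set (X := fun i => rsum p (fun j => At i j * rsum p (fun l => D j l * w l))).
  assert (HN : 1 <= INR n) by (apply (le_INR 1); assumption).
  assert (Hs : 0 < sqrt (INR n)) by now apply sqrt_INR_pos.
  assert (Hss : sqrt (INR n) * sqrt (INR n) = INR n) by apply sqrt_sqrt, pos_INR.
  set (K := T / (2 * (a_u - a_l) ^ 2)).
  apply Rle_trans with (rsum n (fun i => K * X i ^ 2)).
  - apply rsum_le; intros i Hi.
    rewrite intensity_diff by congruence.
    rewrite (rsum_ext p _ (fun j => At i j * rsum p (fun l => D j l * w l)))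
      by (intros; now rewrite Hdiff).
    fold (X i).
    destruct (intensity_bounds f0 i Hi Hf0 H0) as [Hlow _].
    set (m0 := intensity p T A f0 i) in *.
    assert (Hm0 : 0 < m0) by (eapply Rlt_le_trans; [|apply Hlow]; apply Rdiv_lt_0_compat; lra).
    apply Rle_trans with ((T / (2 * (a_u - a_l) * sqrt (INR n)) * X i) ^ 2 * (2 * INR n / T)).
    + unfold Rdiv at 1; apply Rmult_le_compat_l; [apply pow2_ge_0|].
      replace (2 * INR n / T) with (/ (T / (2 * INR n))) by (field; lra).
      apply Rinv_le_contravar; [apply Rdiv_lt_0_compat; lra | assumption].
    + right; unfold K; set (r := sqrt (INR n)) in *; rewrite <- Hss; field; split; lra.
  - rewrite rsum_scal.
    assert (HX : sqnorm n X <= (1 + delta) * sqnorm p w) by now apply HA2.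
    unfold sqnorm in HX.
    assert (0 <= K) by (unfold K; apply Rmult_le_pos; [lra|];
                        left; apply Rinv_0_lt_compat; nra).
    apply Rle_trans with (K * ((1 + delta) * sqnorm p w)); [now apply Rmult_le_compat_l|].
    right; unfold K; field; lra.
Qed.

End Sensing.

(** * A chi-square change of measure *)

(* When [I = 1] the slack is the square [(P0 - lam (Pj - P0))^2 / (2 lam P0)]. *)
Lemma indicator_change_of_measure lam P0 Pj I : 0 < lam -> 0 < P0 -> (I = 0 \/ I = 1) ->
  Pj * I <= (1 + / (2 * lam)) * P0 * I + lam / 2 * (Pj ^ 2 / P0 - 2 * Pj + P0).
Proof.
  intros Hlam HP0 HI.
  assert (E : Pj ^ 2 / P0 - 2 * Pj + P0 = (Pj - P0) ^ 2 / P0) by (field; lra).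
  assert (0 <= (Pj - P0) ^ 2 / P0)
    by (apply Rmult_le_pos; [apply pow2_ge_0 | left; now apply Rinv_0_lt_compat]).
  destruct HI as [-> | ->]; rewrite E; [nra|].
  assert (E1 : (1 + / (2 * lam)) * P0 * 1 + lam / 2 * ((Pj - P0) ^ 2 / P0) - Pj * 1
               = (P0 - lam * (Pj - P0)) ^ 2 / (2 * lam * P0)) by (field; lra).
  assert (0 <= (P0 - lam * (Pj - P0)) ^ 2 / (2 * lam * P0))
    by (apply Rmult_le_pos; [apply pow2_ge_0 | left; apply Rinv_0_lt_compat; nra]).
  lra.
Qed.

(* Tests [I j] that are mutually exclusive cannot all succeed under their own laws [Pj j]
   unless these are far from a common reference [P0] in chi-square. *)
Lemma exclusive_tests_chi2 n M m (P0 : (nat -> nat) -> R) (Pj I : nat -> (nat -> nat) -> R) lam :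
  0 < lam -> (forall y, 0 < P0 y) -> (forall j y, I j y = 0 \/ I j y = 1) ->
  (forall y, rsum m (fun j => I j y) <= 1) ->
  rsum m (fun j => box_sum n M (fun y => Pj j y * I j y))
  <= (1 + / (2 * lam)) * box_sum n M P0
     + lam / 2 * rsum m (fun j => box_sum n M (fun y => Pj j y ^ 2 / P0 y)
                                  - 2 * box_sum n M (Pj j) + box_sum n M P0).
Proof.
  intros Hlam HP0 HI01 Hexcl.
  rewrite <- (box_sum_rsum n M m (fun j y => Pj j y * I j y)).
  rewrite (rsum_ext m _ (fun j => box_sum n M (fun y => Pj j y ^ 2 / P0 y - 2 * Pj j y + P0 y)))
    by (intros; now rewrite box_sum_plus, box_sum_minus, box_sum_scal).
  rewrite <- (box_sum_rsum n M m (fun j y => Pj j y ^ 2 / P0 y - 2 * Pj j y + P0 y)).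
  rewrite <- !box_sum_scal, <- box_sum_plus; apply box_sum_le; intros y _.
  apply Rle_trans with (rsum m (fun j => (1 + / (2 * lam)) * P0 y * I j y
                                       + lam / 2 * (Pj j y ^ 2 / P0 y - 2 * Pj j y + P0 y))).
  - apply rsum_le; intros; now apply indicator_change_of_measure.
  - rewrite rsum_plus, !rsum_scal; apply Rplus_le_compat_r.
    assert (0 < / (2 * lam)) by (apply Rinv_0_lt_compat; lra).
    specialize (HP0 y); specialize (Hexcl y).
    rewrite <- (Rmult_1_r ((1 + / (2 * lam)) * P0 y)) at 2.
    apply Rmult_le_compat_l; [apply Rmult_le_pos|]; lra.
Qed.

(** * Elementary estimates *)

Lemma le_pow16 x : 0 <= x -> x <= (1 + x / 32) ^ 16.
Proof.
  intros Hx; set (z := x / 32).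
  assert (Hquart : forall z, 0 <= z -> 1 + 4 * z + 6 * z ^ 2 <= (1 + z) ^ 4).
  { intros w Hw; assert (0 <= w ^ 3) by (now apply pow_le).
    assert (0 <= w ^ 4) by (now apply pow_le).
    replace ((1 + w) ^ 4) with (1 + 4 * w + 6 * w ^ 2 + 4 * w ^ 3 + w ^ 4) by ring; lra. }
  assert (0 <= z) by (unfold z; lra).
  set (w := 4 * z + 6 * z ^ 2).
  assert (0 <= w) by (unfold w; pose proof (pow2_ge_0 z); lra).
  assert (1 + w <= (1 + z) ^ 4) by (apply Hquart in H; unfold w; lra).
  assert ((1 + w) ^ 4 <= ((1 + z) ^ 4) ^ 4) by (apply pow_incr; lra).
  pose proof (Hquart w H0).
  replace 16%nat with (4 * 4)%nat by reflexivity; rewrite pow_mult.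
  assert (w >= 4 * z) by (unfold w; pose proof (pow2_ge_0 z); lra).
  assert (w ^ 2 >= 16 * z ^ 2) by (simpl; nra).
  assert (x = 32 * z) by (unfold z; field).
  pose proof (pow2_ge_0 (z - 1 / 12)); simpl in *; nra.
Qed.

Lemma ln_le_48_ln m r : 2 <= m -> 1 <= r -> r <= 2 * (m + 2) -> ln r <= 48 * ln (1 + m / 32).
Proof.
  intros Hm Hr1 Hr2.
  assert (r <= m ^ 3) by (simpl; nra).
  assert (m ^ 3 <= (1 + m / 32) ^ (16 * 3))
    by (rewrite pow_mult; apply pow_incr; split; [lra | apply le_pow16; lra]).
  replace 48 with (INR (16 * 3)) by (rewrite mult_INR; simpl; lra).
  rewrite <- ln_pow by lra; apply ln_le_compat; lra.
Qed.

Lemma Rmin_scal c a b : 0 <= c -> c * Rmin a b = Rmin (c * a) (c * b).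
Proof.
  intros Hc; destruct (Rle_or_lt a b).
  - rewrite !Rmin_left; [reflexivity | apply Rmult_le_compat_l |]; lra.
  - rewrite !Rmin_right; [reflexivity | apply Rmult_le_compat_l |]; lra.
Qed.

Lemma Rmin_mult_le a b g : 0 <= a -> 0 <= b -> 0 < g -> Rmin 1 g * Rmin a b <= Rmin a (g * b).
Proof.
  intros; pose proof (Rmin_l 1 g); pose proof (Rmin_r 1 g).
  pose proof (Rmin_l a b); pose proof (Rmin_r a b).
  assert (0 <= Rmin 1 g) by (apply Rmin_glb; lra).
  assert (0 <= Rmin a b) by (apply Rmin_glb; lra).
  apply Rmin_glb; nra.
Qed.

Lemma lb_max_attained p s T delta D : (1 <= s)%nat ->
  exists k, (1 <= k <= s)%nat /\ lb_max p s T delta D = lb_term p T delta D k.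
Proof.
  intros Hs; unfold lb_max.
  destruct (fold_Rmax_cases (map (lb_term p T delta D) (seq 1 s)) (lb_term p T delta D 1))
    as [E|E].
  - exists 1%nat; split; [lia | assumption].
  - apply in_map_iff in E as [k [E Hk]]; apply in_seq in Hk.
    exists k; split; [lia | congruence].
Qed.

(** * The lower bound for a fixed sparsity level *)

Section LowerBound.

Variables (n p s : nat) (a_l a_u T delta : R) (D At : nat -> nat -> R).
Hypotheses (Hlu : a_l < a_u) (Hn : (1 <= n)%nat) (HT : 0 < T).
Hypothesis HD : orthonormal_D p D.
Hypothesis HA1 : assumption1 n p a_l a_u At.
Hypothesis HA2 : assumption2 n p s At D delta.

Variables (k q M : nat) (t : R).
Hypotheses (Hk : (1 <= k)%nat) (Hks : (k <= s)%nat) (Hq : (3 <= q)%nat).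
Hypothesis Hkq : (k * q <= p - 1)%nat.
Hypotheses (Ht : 0 <= t) (Htlambda : t * lambda_loc p D k <= / INR p).
Hypothesis Hchi : T * t ^ 2 * (1 + delta) / (a_u - a_l) ^ 2 <= ln (1 + INR (q - 1) / 32).
Hypothesis HM : INR n * (exp T - exp_partial_sum M T) <= / 64.

Variable fhat : (nat -> nat) -> nat -> R.

Let A := A_of n a_l a_u At.
Let F v := packing_density p D t k q v.
Let P v := likelihood n p T A (F v).
Let err b v := box_sum n M (fun y => P v y * (1 - decode p D t q (fhat y) b (v b))).

Let Hp : (1 <= p)%nat.
Proof. nia. Qed.

Lemma packing_intensity_bounds v i : in_box k q v -> (i < n)%nat ->
  T / (2 * INR n) <= intensity p T A (F v) i <= T.
Proof.
  intros Hv Hi; apply intensity_bounds; auto.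
  - now apply packing_density_nonneg.
  - now apply packing_density_sum.
Qed.

Lemma packing_intensity_pos v i : in_box k q v -> (i < n)%nat -> 0 < intensity p T A (F v) i.
Proof.
  intros Hv Hi; eapply Rlt_le_trans; [| apply packing_intensity_bounds; eauto].
  apply Rdiv_lt_0_compat; [lra|]; apply Rmult_lt_0_compat; [lra|]; apply lt_0_INR; lia.
Qed.

Lemma packing_mass v : in_box k q v -> 1 - / 64 <= box_sum n M (P v) <= 1.
Proof.
  intros Hv; unfold P.
  assert (Hmu : forall i, (i < n)%nat -> 0 <= intensity p T A (F v) i <= T).
  { intros i Hi; split; [left; now apply packing_intensity_pos|].
    now apply packing_intensity_bounds. }
  pose proof (likelihood_mass_bounds n p M T A (F v) Hmu); lra.
Qed.

Lemma risk_ge_errors v : in_box k q v ->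
  t ^ 2 / 2 * rsum k (fun b => err b v) <= partial_risk n p T A (F v) fhat M.
Proof.
  intros Hv; unfold err.
  change (partial_risk n p T A (F v) fhat M)
    with (box_sum n M (fun y => P v y * sqnorm p (fun j => fhat y j - F v j))).
  rewrite <- box_sum_rsum, <- box_sum_scal; apply box_sum_le; intros y _.
  assert (0 < P v y) by (apply likelihood_pos; intros; now apply packing_intensity_pos).
  rewrite rsum_scal.
  replace (t ^ 2 / 2 * (P v y * rsum k (fun b => 1 - decode p D t q (fhat y) b (v b))))
    with (P v y * (t ^ 2 / 2 * rsum k (fun b => 1 - decode p D t q (fhat y) b (v b))))
    by ring.
  apply Rmult_le_compat_l; [lra|]; now apply sqnorm_ge_decoding_errors.
Qed.

(* Moving the [1] of block [b] changes [f] by [t (d_c - d_c')], a [2]-sparse vector in the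
   frame [D]; Assumption 2 then controls the chi-square divergence. *)
Lemma packing_chi2 v b l l' :
  in_box k q v -> (b < k)%nat -> (l < q)%nat -> (l' < q)%nat -> l <> l' ->
  box_sum n M (fun y => P (update v b l) y ^ 2 / P (update v b l') y) <= 1 + INR (q - 1) / 32.
Proof.
  intros Hv Hb Hl Hl' Hll'.
  set (c := S (b * q + l)); set (c' := S (b * q + l')).
  assert (Hc : (c < p /\ c' < p)%nat) by (unfold c, c'; nia).
  set (w := fun j => t * (kron j c - kron j c')).
  assert (Hdiff : forall i, (i < p)%nat ->
            F (update v b l) i - F (update v b l') i = rsum p (fun j => D i j * w j)).
  { intros i Hi; unfold F; rewrite packing_density_update_diff by (auto; nia).
    unfold w; rewrite (rsum_ext p _ (fun j => t * (D i j * kron j c - D i j * kron j c')))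
      by (intros; ring).
    rewrite rsum_scal, rsum_minus, !rsum_mult_kron by lia; reflexivity. }
  assert (Hw : sqnorm p w = 2 * t ^ 2) by (apply sqnorm_kron_diff; unfold c, c'; lia).
  assert (Hnnz : (nnz p w <= 2 * s)%nat) by (eapply Nat.le_trans; [apply nnz_kron_diff | lia]).
  eapply Rle_trans; [apply likelihood_chi2_le|].
  - intros; apply packing_intensity_pos; auto; now apply in_box_update.
  - intros; left; apply packing_intensity_pos; auto; now apply in_box_update.
  - rewrite <- (exp_ln (1 + INR (q - 1) / 32)) by (pose proof (pos_INR (q - 1)); lra).
    apply exp_le_compat; eapply Rle_trans; [| apply Hchi].
    eapply Rle_trans; [apply (chi2_intensity_le n p s a_l a_u T delta D At) with (w := w)|];
      auto.
    + apply packing_density_nonneg; auto; now apply in_box_update.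
    + now apply packing_density_sum.
    + now apply packing_density_sum.
    + rewrite Hw; right; field; lra.
Qed.

Lemma packing_chi2_term v b j : in_box k (q - 1) v -> (b < k)%nat -> (j < q - 1)%nat ->
  let Pj := P (update v b j) in let P0 := P (update v b (q - 1)) in
  box_sum n M (fun y => Pj y ^ 2 / P0 y) - 2 * box_sum n M Pj + box_sum n M P0
  <= INR (q - 1) / 32 + / 32.
Proof.
  intros Hv Hb Hj Pj P0.
  assert (Hvq : in_box k q v) by (apply (in_box_mono k (q - 1)); auto; lia).
  assert (box_sum n M (fun y => Pj y ^ 2 / P0 y) <= 1 + INR (q - 1) / 32)
    by (apply packing_chi2; auto; lia).
  assert (1 - / 64 <= box_sum n M Pj) by (apply packing_mass, in_box_update; auto; lia).
  assert (box_sum n M P0 <= 1) by (apply packing_mass, in_box_update; auto; lia).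
  lra.
Qed.

(* Within one block, the [q - 1] hypotheses that move its [1] are pairwise close in chi-square to
   a common reference, so on average they are misdecoded with probability at least [1/4]. *)
Lemma block_errors v b : in_box k (q - 1) v -> (b < k)%nat ->
  INR (q - 1) / 4 <= rsum (q - 1) (fun j => err b (update v b j)).
Proof.
  intros Hv Hb.
  set (m := (q - 1)%nat) in *.
  assert (Hmr : 2 <= INR m) by (replace 2 with (INR 2) by (simpl; lra); apply le_INR; lia).
  assert (Hvq : forall j, (j < q)%nat -> in_box k q (update v b j))
    by (intros; apply in_box_update; [apply (in_box_mono k m)|]; auto; lia).
  set (P0 := P (update v b m)); set (Pj := fun j => P (update v b j)).
  set (I := fun j (y : nat -> nat) => decode p D t q (fhat y) b j).
  rewrite (rsum_ext m _ (fun j => box_sum n M (Pj j) - box_sum n M (fun y => Pj j y * I j y))).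
  2: { intros j _; unfold err, Pj, I; rewrite update_same, <- box_sum_minus.
       apply box_sum_ext; intros; ring. }
  rewrite rsum_minus.
  assert (Hmass : INR m * (1 - / 64) <= rsum m (fun j => box_sum n M (Pj j))).
  { rewrite <- rsum_const; apply rsum_le; intros j Hj; apply packing_mass, Hvq; lia. }
  assert (HP0mass : box_sum n M P0 <= 1) by (apply packing_mass, Hvq; lia).
  assert (Hchi2 : rsum m (fun j => box_sum n M (fun y => Pj j y ^ 2 / P0 y)
                                   - 2 * box_sum n M (Pj j) + box_sum n M P0)
                  <= INR m * (INR m / 32 + / 32)).
  { rewrite <- rsum_const; apply rsum_le; intros j Hj; now apply packing_chi2_term. }
  assert (Htests : rsum m (fun j => box_sum n M (fun y => Pj j y * I j y))
                   <= (1 + INR m / 8) * box_sum n M P0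
                      + 2 / INR m * rsum m (fun j => box_sum n M (fun y => Pj j y ^ 2 / P0 y)
                                                   - 2 * box_sum n M (Pj j) + box_sum n M P0)).
  { replace (INR m / 8) with (/ (2 * (4 / INR m))) by (field; lra).
    replace (2 / INR m) with (4 / INR m / 2) by (field; lra).
    apply exclusive_tests_chi2.
    - apply Rdiv_lt_0_compat; lra.
    - intros; apply likelihood_pos; intros; apply packing_intensity_pos; auto; apply Hvq; lia.
    - intros; apply decode_01.
    - intros; apply decode_sum_le_1; lia. }
  assert (2 / INR m * rsum m (fun j => box_sum n M (fun y => Pj j y ^ 2 / P0 y)
                                      - 2 * box_sum n M (Pj j) + box_sum n M P0)
          <= INR m / 16 + / 16).
  { apply Rle_trans with (2 / INR m * (INR m * (INR m / 32 + / 32))); [|right; field; lra].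
    apply Rmult_le_compat_l; [apply Rlt_le, Rdiv_lt_0_compat|]; lra. }
  assert ((1 + INR m / 8) * box_sum n M P0 <= 1 + INR m / 8)
    by (rewrite <- (Rmult_1_r (1 + INR m / 8)) at 2; apply Rmult_le_compat_l; lra).
  lra.
Qed.

Lemma average_risk_ge :
  INR (q - 1) ^ k * (INR k * t ^ 2 / 8)
  <= box_sum k (q - 1) (fun v => partial_risk n p T A (F v) fhat M).
Proof.
  set (m := (q - 1)%nat).
  assert (Hmr : 0 < INR m) by (apply lt_0_INR; lia).
  apply Rle_trans with (box_sum k m (fun v => t ^ 2 / 2 * rsum k (fun b => err b v))).
  2: { apply box_sum_le; intros v Hv; apply risk_ge_errors, (in_box_mono k m); auto; lia. }
  rewrite box_sum_scal, box_sum_rsum.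
  assert (Hblock : forall b, (b < k)%nat -> INR m ^ k / 4 <= box_sum k m (err b)).
  { intros b Hb; apply Rmult_le_reg_l with (INR m); [assumption|].
    rewrite <- (box_sum_resample k m b (err b) Hb).
    replace (INR m * (INR m ^ k / 4)) with (box_sum k m (fun _ => INR m / 4))
      by (rewrite box_sum_const; field).
    apply box_sum_le; intros v Hv; now apply block_errors. }
  apply Rle_trans with (t ^ 2 / 2 * rsum k (fun _ => INR m ^ k / 4)).
  - rewrite rsum_const; right; field.
  - apply Rmult_le_compat_l; [apply Rmult_le_pos; [apply pow2_ge_0 | lra]|].
    now apply rsum_le.
Qed.

Lemma packing_risk_exceeds c : c < INR k * t ^ 2 / 8 ->
  exists f, in_F p s D f /\ c < partial_risk n p T A f fhat M.
Proof.
  intros Hc.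
  assert (Hpow : 0 < INR (q - 1) ^ k) by (apply pow_lt, lt_0_INR; lia).
  destruct (box_sum_gt_exists k (q - 1) (fun v => partial_risk n p T A (F v) fhat M) c)
    as [v [Hv Hrisk]].
  - eapply Rlt_le_trans; [| apply average_risk_ge]; now apply Rmult_lt_compat_l.
  - exists (F v); split; [| exact Hrisk].
    apply packing_density_in_F; auto; apply (in_box_mono k (q - 1)); auto; lia.
Qed.

End LowerBound.

(** * Choice of the parameters *)

Lemma truncation_exists n T : (1 <= n)%nat ->
  exists M, INR n * (exp T - exp_partial_sum M T) <= / 64.
Proof.
  intros Hn; assert (1 <= INR n) by (apply (le_INR 1); assumption).
  destruct (exp_tail_small T (/ (64 * INR n))) as [M HM];
    [apply Rinv_0_lt_compat; lra|].
  exists M; apply Rle_trans with (INR n * / (64 * INR n)); [apply Rmult_le_compat_l; lra|].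
  right; field; lra.
Qed.

Lemma block_length_bounds p k : (1 <= k)%nat -> (3 * k + 3 < p)%nat ->
  (3 <= (p - 1) / k /\ k * ((p - 1) / k) <= p - 1 /\ p - 1 < k * ((p - 1) / k + 1))%nat.
Proof.
  intros Hk Hp; split; [apply Nat.div_le_lower_bound; lia|]; split.
  - apply Nat.Div0.mul_div_le.
  - pose proof (Nat.div_mod_eq (p - 1) k); pose proof (Nat.mod_upper_bound (p - 1) k).
    nia.
Qed.

Lemma Rinv_nonneg x : 0 <= x -> 0 <= / x.
Proof. intros [Hx | <-]; [left; now apply Rinv_0_lt_compat | rewrite Rinv_0; lra]. Qed.

(* [lambda = 0] is allowed: then [/ (P^2 lambda^2) = / 0 = 0] forces [t = 0]. *)
Lemma mult_le_inv_of_square_le t lam P : 0 <= t -> 0 < P ->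
  t ^ 2 <= / (P ^ 2 * lam ^ 2) -> t * lam <= / P.
Proof.
  intros Ht HP Ht2.
  assert (0 < / P) by now apply Rinv_0_lt_compat.
  destruct (Req_dec lam 0) as [->|Hlam]; [lra|].
  assert (0 < lam ^ 2) by (rewrite <- Rsqr_pow2; now apply Rsqr_pos_lt).
  assert (Hprod : 0 < P ^ 2 * lam ^ 2) by (apply Rmult_lt_0_compat; [apply pow_lt|]; lra).
  assert (Hsq : (t * lam * P) ^ 2 <= 1).
  { replace ((t * lam * P) ^ 2) with (t ^ 2 * (P ^ 2 * lam ^ 2)) by ring.
    replace 1 with (/ (P ^ 2 * lam ^ 2) * (P ^ 2 * lam ^ 2)) by (field; lra).
    apply Rmult_le_compat_r; lra. }
  assert (t * lam * P <= 1) by nra.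
  apply Rmult_le_reg_r with P; [lra|]; rewrite Rinv_l; lra.
Qed.

Lemma lb_term_le_radius p k m T delta D a_l a_u :
  a_l < a_u -> 0 < T -> 0 <= delta -> (1 <= k)%nat -> (2 <= m)%nat ->
  (3 * k + 4 <= p)%nat -> (p < k * (m + 2) + 1)%nat ->
  Rmin 1 ((a_u - a_l) ^ 2 / 48) * lb_term p T delta D k
  <= INR k * Rmin (/ (INR p ^ 2 * lambda_loc p D k ^ 2))
                  ((a_u - a_l) ^ 2 * ln (1 + INR m / 32) / (T * (1 + delta))).
Proof.
  intros Hlu HT Hdelta Hk Hm Hp1 Hp2.
  assert (Hkr : 1 <= INR k) by (apply (le_INR 1); lia).
  assert (Hmr : 2 <= INR m) by (replace 2 with (INR 2) by (simpl; lra); apply le_INR; lia).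
  assert (Hp1r : 3 * INR k + 4 <= INR p)
    by (apply le_INR in Hp1; rewrite plus_INR, mult_INR in Hp1; simpl in Hp1; lra).
  assert (Hp2r : INR p < INR k * (INR m + 2) + 1)
    by (apply lt_INR in Hp2; rewrite plus_INR, mult_INR, plus_INR in Hp2; simpl in Hp2; lra).
  set (r := (INR p - INR k - 1) / (INR k / 2)).
  assert (Hr : r * (INR k / 2) = INR p - INR k - 1) by (unfold r; field; lra).
  assert (Hl48 : ln r <= 48 * ln (1 + INR m / 32)) by (apply ln_le_48_ln; nra).
  assert (Hl0 : 0 <= ln r) by (rewrite <- ln_1; apply ln_le_compat; nra).
  unfold lb_term; fold r.
  set (a := INR k / (INR p ^ 2 * lambda_loc p D k ^ 2)).
  set (b := INR k / ((1 + delta) * T) * ln r).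
  assert (Hinv : 0 <= / (INR p ^ 2 * lambda_loc p D k ^ 2))
    by (apply Rinv_nonneg, Rmult_le_pos; apply pow2_ge_0).
  assert (Ha : 0 <= a) by (unfold a, Rdiv; apply Rmult_le_pos; lra).
  assert (Hb : 0 <= b)
    by (unfold b; apply Rmult_le_pos; [apply Rmult_le_pos; [lra|]; left;
        apply Rinv_0_lt_compat; nra | assumption]).
  assert (Hgam : 0 < (a_u - a_l) ^ 2 / 48) by (apply Rdiv_lt_0_compat; [apply pow_lt|]; lra).
  rewrite (Rmin_scal (INR k)) by lra.
  eapply Rle_trans; [apply Rmin_mult_le; assumption|].
  apply Rmin_glb; [apply Rmin_l | eapply Rle_trans; [apply Rmin_r|]].
  unfold b.
  apply Rle_trans with ((a_u - a_l) ^ 2 * INR k / (T * (1 + delta)) * (ln r / 48));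
    [right; field; lra|].
  replace (INR k * ((a_u - a_l) ^ 2 * ln (1 + INR m / 32) / (T * (1 + delta))))
    with ((a_u - a_l) ^ 2 * INR k / (T * (1 + delta)) * ln (1 + INR m / 32)) by (field; lra).
  apply Rmult_le_compat_l; [|lra].
  unfold Rdiv; apply Rmult_le_pos; [apply Rmult_le_pos; [apply pow2_ge_0 | lra]|].
  left; apply Rinv_0_lt_compat; nra.
Qed.

(* [t^2 = min (1 / (p lambda_k)^2, (a_u - a_l)^2 log(1 + m/32) / ((1 + delta) T))]: the first
   term keeps the packing nonnegative, the second keeps it chi-square close. *)
Lemma radius_choice p k m T delta D a_l a_u :
  a_l < a_u -> 0 < T -> 0 <= delta -> (1 <= k)%nat -> (2 <= m)%nat ->
  (3 * k + 4 <= p)%nat -> (p < k * (m + 2) + 1)%nat ->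
  exists t, 0 <= t /\ t * lambda_loc p D k <= / INR p /\
    T * t ^ 2 * (1 + delta) / (a_u - a_l) ^ 2 <= ln (1 + INR m / 32) /\
    Rmin 1 ((a_u - a_l) ^ 2 / 48) * lb_term p T delta D k <= INR k * t ^ 2.
Proof.
  intros Hlu HT Hdelta Hk Hm Hp1 Hp2.
  set (Y := (a_u - a_l) ^ 2 * ln (1 + INR m / 32) / (T * (1 + delta))).
  assert (HY : 0 < Y).
  { assert (2 <= INR m) by (replace 2 with (INR 2) by (simpl; lra); apply le_INR; lia).
    assert (0 < ln (1 + INR m / 32)) by (rewrite <- ln_1; apply ln_increasing; lra).
    unfold Y; apply Rdiv_lt_0_compat; [apply Rmult_lt_0_compat; [apply pow_lt|]|]; nra. }
  set (t2 := Rmin (/ (INR p ^ 2 * lambda_loc p D k ^ 2)) Y).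
  assert (Hlb := lb_term_le_radius p k m T delta D a_l a_u Hlu HT Hdelta Hk Hm Hp1 Hp2).
  fold Y t2 in Hlb.
  assert (Ht2 : 0 <= t2)
    by (apply Rmin_glb; [apply Rinv_nonneg, Rmult_le_pos; apply pow2_ge_0 | lra]).
  exists (sqrt t2).
  assert (Hsq : sqrt t2 ^ 2 = t2) by (simpl; rewrite Rmult_1_r; now apply sqrt_sqrt).
  split; [apply sqrt_pos|]; split; [|split]; rewrite ?Hsq; [| |assumption].
  - apply mult_le_inv_of_square_le; [apply sqrt_pos | apply lt_0_INR; lia|].
    rewrite Hsq; apply Rmin_l.
  - apply Rle_trans with (T * Y * (1 + delta) / (a_u - a_l) ^ 2).
    + unfold Rdiv; apply Rmult_le_compat_r; [left; apply Rinv_0_lt_compat, pow_lt; lra|].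
      apply Rmult_le_compat_r; [lra|]; apply Rmult_le_compat_l; [lra | apply Rmin_r].
    + right; unfold Y; field; repeat split; try lra; apply pow_nonzero; lra.
Qed.

Theorem theorem1 :
  forall a_l a_u : R, a_l < a_u ->
  exists C_L : R, 0 < C_L /\
  forall (n p s : nat) (T delta : R) (D At : nat -> nat -> R),
    (1 <= n)%nat -> (10 <= p)%nat -> (1 <= s)%nat -> INR s < INR p / 3 - 1 ->
    0 < T ->
    orthonormal_D p D ->
    assumption1 n p a_l a_u At ->
    0 <= delta < 1 ->
    assumption2 n p s At D delta ->
    forall fhat : (nat -> nat) -> nat -> R,
    forall c : R, c < C_L * lb_max p s T delta D ->
    exists f : nat -> R, in_F p s D f /\
      exists M : nat, c < partial_risk n p T (A_of n a_l a_u At) f fhat M.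
Proof.
  intros a_l a_u Hlu.
  set (gam := (a_u - a_l) ^ 2 / 48).
  assert (Hgam : 0 < gam) by (apply Rdiv_lt_0_compat; [apply pow_lt|]; lra).
  exists (Rmin 1 gam / 8); split; [apply Rdiv_lt_0_compat; [apply Rmin_glb_lt|]; lra|].
  intros n p s T delta D At Hn Hp Hs Hsp HT HD HA1 [Hdelta _] HA2 fhat c Hc.
  destruct (lb_max_attained p s T delta D Hs) as [k [Hk Hlb]]; rewrite Hlb in Hc.
  assert (Hk3 : (3 * k + 3 < p)%nat).
  { assert (INR k <= INR s) by (apply le_INR; lia).
    apply INR_lt; rewrite plus_INR, mult_INR; simpl; lra. }
  set (q := ((p - 1) / k)%nat).
  destruct (block_length_bounds p k) as [Hq [Hkq Hpq]]; [lia | lia |].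
  assert (Hpm : (p < k * (q - 1 + 2) + 1)%nat) by (fold q in Hpq; nia).
  destruct (radius_choice p k (q - 1) T delta D a_l a_u Hlu HT Hdelta
              ltac:(lia) ltac:(lia) ltac:(lia) Hpm) as [t [Ht [Htlam [Hchi Hlb_t]]]].
  destruct (truncation_exists n T Hn) as [M HM].
  destruct (packing_risk_exceeds n p s a_l a_u T delta D At Hlu Hn HT HD HA1 HA2
              k q M t ltac:(lia) ltac:(lia) Hq Hkq Ht Htlam Hchi HM fhat c)
    as [f [Hf Hrisk]]; [|eauto].
  fold gam in Hlb_t; lra.
Qed.
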